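(* Let $\Bbbk$ be a field. Let $A'$ be a standard graded artinian $\Bbbk$-algebra failing the WLP, and let $A''$ be a standard graded artinian $\Bbbk$-algebra whose Hilbert series has at least one isolated peak. Then $A = A' \otimes_\Bbbk A''$ fails the WLP. Specifically, if $A'$ fails the WLP in degree $i$ and the Hilbert series of $A''$ has an isolated peak in degree $j$, then $A$ fails the WLP in degree $i+j$.
   Context: A standard graded artinian algebra $A=\bigoplus_i A_i$ has the WLP if there is a linear form $\ell$ such that $\times\ell:A_k\to A_{k+1}$ has maximal rank (is injective or surjective) for every $k$. $A$ fails the WLP in degree $i$ if for a general linear form $\ell$ the map $\times \ell: A_i\to A_{i+1}$ does not have maximal rank. The Hilbert function is $\mathrm{HF}(A,k)=\dim_\Bbbk A_k$; the Hilbert series has an isolated peak in degree $j\ge 1$ if $\mathrm{HF}(A,j-1)<\mathrm{HF}(A,j)>\mathrm{HF}(A,j+1)$. *)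

From HB Require Import structures.
From mathcomp Require Import all_boot all_order all_algebra.
From mathcomp Require Import mpoly.
Set Implicit Arguments. Unset Strict Implicit. Unset Printing Implicit Defensive.
Import Order.TTheory GRing.Theory.
Local Open Scope ring_scope.

(* A standard graded artinian K-algebra is presented as A = K[x_1..x_n]/I,
   with I a proper homogeneous ideal (given as a Prop-predicate) such that
   A_d = 0 for d large. *)

Section Defs.
Variables (K : fieldType) (n : nat).
Implicit Types (I : {mpoly K[n]} -> Prop) (p f g l : {mpoly K[n]}).

Definition is_ideal I :=
  [/\ I 0, (forall p q, I p -> I q -> I (p + q)) & (forall r p, I p -> I (r * p))].

Definition is_homog_ideal I :=
  is_ideal I /\ (forall p d, I p -> I (pihomog mdeg d p)).

Definition std_graded_artinian I :=
  [/\ is_homog_ideal I, ~ I 1 &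
      exists N : nat, forall (d : nat) p, (N <= d)%N -> p \is d.-homog -> I p].

(* x l : A_i -> A_{i+1} injective / surjective *)
Definition mul_injective I l (i : nat) :=
  forall f, f \is i.-homog -> I (l * f) -> I f.
Definition mul_surjective I l (i : nat) :=
  forall g, g \is i.+1.-homog -> exists2 f, f \is i.-homog & I (g - l * f).
Definition mul_max_rank I l (i : nat) :=
  mul_injective I l i \/ mul_surjective I l i.

(* A = K[x]/I fails the WLP in degree i: no linear form (so in particular a
   general one does not) gives a map A_i -> A_{i+1} of maximal rank. *)
Definition fails_WLP_in_degree I (i : nat) :=
  forall l, l \is 1.-homog -> ~ mul_max_rank I l i.

Definition has_WLP I :=
  exists2 l, l \is 1.-homog & forall i, mul_max_rank I l i.

(* HF(K[x]/I, k) = h : there is a basis of A_k = R_k / I_k of size h *)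
Definition HF_is I (k h : nat) :=
  exists s : h.-tuple {mpoly K[n]},
    [/\ forall t, tnth s t \is k.-homog,
        forall f, f \is k.-homog ->
          exists c : 'I_h -> K, I (f - \sum_(t < h) c t *: tnth s t) &
        forall c : 'I_h -> K, I (\sum_(t < h) c t *: tnth s t) -> forall t, c t = 0].

Definition isolated_peak I (j : nat) :=
  (1 <= j)%N /\
  exists a b c, [/\ HF_is I j.-1 a, HF_is I j b, HF_is I j.+1 c,
                    (a < b)%N & (c < b)%N].

Definition ideal_gen (S : {mpoly K[n]} -> Prop) : {mpoly K[n]} -> Prop :=
  fun f => exists s : seq ({mpoly K[n]} * {mpoly K[n]}),
    (forall x, x \in s -> S x.2) /\ f = \sum_(x <- s) x.1 * x.2.

End Defs.

(* Tensor product: K[x_1..x_m]/I' (x) K[y_1..y_n]/I'' = K[x,y]/(I' + I'')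
   where the variables of K[x,y] are indexed by 'I_(m+n) (x = lshift,
   y = rshift). *)
Definition ext_left (K : fieldType) (m n : nat) (p : {mpoly K[m]}) : {mpoly K[m + n]} :=
  p \mPo [tuple 'X_(lshift n i) | i < m].
Definition ext_right (K : fieldType) (m n : nat) (q : {mpoly K[n]}) : {mpoly K[m + n]} :=
  q \mPo [tuple 'X_(rshift m j) | j < n].

Definition tensor_ideal (K : fieldType) (m n : nat)
    (I' : {mpoly K[m]} -> Prop) (I'' : {mpoly K[n]} -> Prop) : {mpoly K[m + n]} -> Prop :=
  ideal_gen (fun f => (exists2 p, I' p & f = ext_left n p)
                   \/ (exists2 q, I'' q & f = ext_right m q)).

From HB Require Import structures.
From mathcomp Require Import all_boot all_order all_algebra.
From mathcomp Require Import mpoly ssrcomplements.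
From mathcomp Require Import ring.
From Stdlib Require Import Classical.
Set Implicit Arguments. Unset Strict Implicit. Unset Printing Implicit Defensive.
Import Order.TTheory GRing.Theory.
Local Open Scope ring_scope.

(* Write a linear form of K[x, y] as l = l' + l'' with l' in x and l'' in y.
   Counting dimensions, the isolated peak of A'' at j makes x l'' neither
   injective on A''_j nor surjective onto A''_j, and x l' fails on A'_i.
   - If l' f' = 0 in A' and l'' f'' = 0 in A'' with f', f'' nonzero, then
     l (f' f'') = (l' f') f'' + f' (l'' f'') = 0 in A.
   - If g' in A'_(i+1) is not in l' A'_i and g'' in A''_j is not in
     l'' A''_(j-1), then g' g'' is not in l A_(i+j).
   Nonvanishing is detected by a tensor functional alpha (x) beta, where
   alpha kills I' (and l' K[x] in the second case) but not f' (resp. g'), and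
   similarly for beta; such functionals exist by linear algebra in a single
   degree, since the ideals are homogeneous. *)

Section Ideal.
Variables (K : fieldType) (n : nat) (I : {mpoly K[n]} -> Prop).
Hypothesis idealI : is_ideal I.

Lemma ideal0 : I 0. Proof. by case: idealI. Qed.
Lemma idealD p q : I p -> I q -> I (p + q). Proof. by case: idealI => _ + _; apply. Qed.
Lemma idealMl r p : I p -> I (r * p). Proof. by case: idealI => _ _; apply. Qed.
Lemma idealMr r p : I p -> I (p * r). Proof. by rewrite mulrC; apply: idealMl. Qed.
Lemma idealZ c p : I p -> I (c *: p). Proof. by rewrite -mul_mpolyC; apply: idealMl. Qed.
Lemma ideal_linear a p q : I p -> I q -> I (a *: p + q).
Proof. by move=> Ip Iq; apply: idealD => //; apply: idealZ. Qed.
Lemma ideal_sum (T : finType) (F : T -> {mpoly K[n]}) :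
  (forall t, I (F t)) -> I (\sum_t F t).
Proof. by move=> IF; apply: (big_ind I ideal0 idealD). Qed.

End Ideal.

Section ScalarFunctional.
Variables (K : fieldType) (k : nat) (f : {mpoly K[k]} -> K).
Hypothesis f_scalar : scalar f.

Lemma scalarP a p q : f (a *: p + q) = a * f p + f q.
Proof. exact: f_scalar. Qed.

Lemma scalarB p q : f (p - q) = f p - f q.
Proof. exact: (zmod_morphism_linear (s := *%R) f_scalar). Qed.

Lemma scalar0 : f 0 = 0.
Proof. by rewrite -(subrr 0) scalarB subrr. Qed.

Lemma scalarD p q : f (p + q) = f p + f q.
Proof. by rewrite -[p in LHS]scale1r scalarP mul1r. Qed.

Lemma scalar_sum (T : Type) (s : seq T) (F : T -> {mpoly K[k]}) :
  f (\sum_(x <- s) F x) = \sum_(x <- s) f (F x).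
Proof. by elim: s => [|x s IH]; rewrite ?big_nil ?scalar0 // !big_cons scalarD IH. Qed.

Lemma scalar_mull u : scalar (fun p => f (u * p)).
Proof. by move=> a p q /=; rewrite mulrDr -scalerAr scalarP. Qed.

End ScalarFunctional.

Lemma scalar_mpolyP (K : fieldType) (k : nat) (f g : {mpoly K[k]} -> K) :
  scalar f -> scalar g -> (forall M, f 'X_[M] = g 'X_[M]) -> f =1 g.
Proof.
move=> f_scalar g_scalar fgX; elim/mpolyind => [|c M p _ _ IH].
  by rewrite (scalar0 f_scalar) (scalar0 g_scalar).
by rewrite (scalarP f_scalar) (scalarP g_scalar) fgX IH.
Qed.

Section MpolyDual.
Variables (K : fieldType) (k : nat) (w : 'X_{1..k} -> K).

Definition mpoly_dual (p : {mpoly K[k]}) : K := \sum_(M <- msupp p) p@_M * w M.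

Lemma mpoly_dualwE b p : (msize p <= b)%N ->
  mpoly_dual p = \sum_(M : 'X_{1..k < b}) p@_M * w M.
Proof.
move=> le_pb; rewrite /mpoly_dual (big_mksub 'X_{1..k < b}) /=; first last.
- by move=> M /msize_mdeg_lt /leq_trans; apply.
- exact: msupp_uniq.
by rewrite big_rmcond //= => M /memN_msupp_eq0 ->; rewrite mul0r.
Qed.

Lemma mpoly_dual_scalar : scalar mpoly_dual.
Proof.
move=> a p q; pose b := maxn (msize p) (maxn (msize q) (msize (a *: p + q))).
rewrite (@mpoly_dualwE b p) ?leq_maxl // (@mpoly_dualwE b q); last first.
  by rewrite (leq_trans (leq_maxl _ _) (leq_maxr _ _)).
rewrite (@mpoly_dualwE b); last by rewrite (leq_trans (leq_maxr _ _) (leq_maxr _ _)).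
rewrite mulr_sumr -big_split; apply: eq_bigr => M _.
by rewrite mcoeffD mcoeffZ mulrDl mulrA.
Qed.

Lemma mpoly_dualX M : mpoly_dual 'X_[M] = w M.
Proof. by rewrite /mpoly_dual msuppX big_seq1 mcoeffX eqxx mul1r. Qed.

End MpolyDual.

Lemma msize_dhomog (K : fieldType) (k d : nat) (p : {mpoly K[k]}) :
  p \is d.-homog -> (msize p <= d.+1)%N.
Proof.
move=> /dhomogP pd; rewrite msizeE big_seq_cond.
by elim/big_rec: _ => // M x /andP[/pd -> _] le_x; rewrite geq_max leqnn.
Qed.

Lemma pihomogMl (K : fieldType) (k e d : nat) (l q : {mpoly K[k]}) : l \is e.-homog ->
  pihomog mdeg (e + d) (l * q) = l * pihomog mdeg d q.
Proof.
move=> le; elim/mpolyind: q => [|c M q _ _ IH]; first by rewrite mulr0 !linear0 mulr0.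
rewrite mulrDr !linearD /= IH mulrDr -scalerAr !linearZ /= -scalerAr pihomogX.
congr (_ *: _ + _); have lM : l * 'X_[M] \is (e + mdeg M).-homog.
  by apply: dhomogM; rewrite ?dhomogX.
case: eqP => [<-|/eqP ne]; first by rewrite pihomog_dE.
by rewrite mulr0 (pihomog_ne0 _ lM) // eqn_add2l.
Qed.

Lemma linear_formE (K : fieldType) (k : nat) (l : {mpoly K[k]}) : l \is 1.-homog ->
  l = \sum_(t < k) l@_U_(t) *: 'X_t.
Proof.
move=> l1; apply/mpolyP => M; rewrite raddf_sum /=.
under eq_bigr => t _ do rewrite mcoeffZ mcoeffX.
have [/mdeg1P[t /eqP ->]|M_not1] := boolP (mdeg M == 1%N).
  rewrite (bigD1 t) //= eqxx mulr1 big1 ?addr0 // => u ut.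
  by rewrite eq_mnm1 (negbTE ut) mulr0.
rewrite (dhomog_nemf_coeff l1) // big1 // => u _.
by case: eqP => [uM|]; [move: M_not1; rewrite -uM mdeg1 | rewrite mulr0].
Qed.

Section RowSubspace.
Variables (K : fieldType) (k : nat) (P : 'rV[K]_k -> Prop).
Hypotheses (P0 : P 0) (P_lin : forall a u v, P u -> P v -> P (a *: u + v)).

Lemma subspace_rowspace : exists A : 'M[K]_k, forall u, P u <-> (u <= A)%MS.
Proof.
have PZ a u : P u -> P (a *: u) by move=> Pu; rewrite -[_ *: _]addr0; apply: P_lin.
have PD u v : P u -> P v -> P (u + v) by move=> Pu Pv; rewrite -[u]scale1r; apply: P_lin.
pose inP (A : 'M[K]_k) := forall u, (u <= A)%MS -> P u.
suff [A [PA AP]] : exists A, inP A /\ forall u, P u -> (u <= A)%MS.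
  by exists A => u; split; [apply: AP | apply: PA].
have rank_ind r : forall A, inP A -> (k - \rank A <= r)%N ->
    exists B, inP B /\ forall u, P u -> (u <= B)%MS.
  elim: r => [|r IH] A PA rkA.
    exists A; split=> // u _; apply: submx_full.
    by rewrite /row_full eqn_leq rank_leq_col -subn_eq0 -leqn0.
  have [AP|nAP] := classic (forall u, P u -> (u <= A)%MS); first by exists A.
  have [w Pw wA] : exists2 w, P w & ~~ (w <= A)%MS.
    apply: NNPP => none; apply: nAP => u Pu; apply: NNPP => /negP uA.
    by apply: none; exists u.
  apply: (IH (A + w)%MS).
    move=> u /sub_addsmxP[[uA uw] /= ->]; apply: PD; first by apply/PA/submxMl.
    by have /sub_rVP[a ->] := submxMl uw w; apply: PZ.
  have : (A < A + w)%MS.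
    by rewrite ltmxE addsmxSl; apply: contra wA; apply: submx_trans (addsmxSr A w).
  rewrite ltmxErank addsmxSl /= => rk_lt.
  by rewrite -ltnS (leq_trans _ rkA) // ltn_sub2l // (leq_trans rk_lt) ?rank_leq_col.
apply: (rank_ind k 0) => [u|]; last by rewrite leq_subr.
by rewrite submx0 => /eqP ->.
Qed.

Lemma subspace_separation v : ~ P v ->
  exists2 c : 'cV[K]_k, (forall u, P u -> (u *m c) 0 0 = 0) & (v *m c) 0 0 != 0.
Proof.
move=> nPv; have [A PA] := subspace_rowspace.
have nz : v *m cokermx A != 0 by rewrite -submxE; apply/negP => /PA.
have [j nzj] : exists j, (v *m cokermx A) 0 j != 0.
  apply: NNPP => none; apply: (negP nz); apply/eqP/rowP => j; rewrite [RHS]mxE.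
  by apply: NNPP => nzj; apply: none; exists j; apply/eqP.
have colE u : (u *m col j (cokermx A)) 0 0 = (u *m cokermx A) 0 j.
  by rewrite !mxE; apply: eq_bigr => l _; rewrite mxE.
exists (col j (cokermx A)); last by rewrite colE.
by move=> u /PA; rewrite submxE colE => /eqP ->; rewrite mxE.
Qed.

End RowSubspace.

Section HomogSeparation.
Variables (K : fieldType) (k d : nat) (W : {mpoly K[k]} -> Prop).
Hypotheses (W0 : W 0) (W_lin : forall a p q, W p -> W q -> W (a *: p + q)).
Hypothesis W_pihomog : forall p, W p -> W (pihomog mdeg d p).

Lemma homog_separation v : v \is d.-homog -> ~ W v ->
  exists alpha : {mpoly K[k]} -> K,
    [/\ scalar alpha, forall p, W p -> alpha p = 0 & alpha v != 0].
Proof.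
move=> vd nWv; pose N := #|{: 'X_{1..k < d.+1}}|.
pose mon (t : 'I_N) : 'X_{1..k} := val (enum_val t).
pose poly_of (c : 'rV[K]_N) := \sum_t c 0 t *: 'X_[mon t].
pose coords p : 'rV[K]_N := \row_t (pihomog mdeg d p)@_(mon t).
have poly_ofP a c c' : poly_of (a *: c + c') = a *: poly_of c + poly_of c'.
  rewrite scaler_sumr -big_split; apply: eq_bigr => t _.
  by rewrite !mxE scalerDl scalerA.
have coordsP a p q : coords (a *: p + q) = a *: coords p + coords q.
  by apply/rowP => t; rewrite !mxE linearP mcoeffD mcoeffZ.
have poly_of_coords p : poly_of (coords p) = pihomog mdeg d p.
  rewrite [RHS](mpolywE (msize_dhomog (pihomogP _ _ _))).
  rewrite (big_enum_val (fun M : 'X_{1..k < d.+1} => _ *: 'X_[val M])).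
  by apply: eq_bigr => t _; rewrite mxE.
have [c Wc cv] : exists2 c : 'cV[K]_N,
    (forall u, W (poly_of u) -> (u *m c) 0 0 = 0) & (coords v *m c) 0 0 != 0.
  apply: subspace_separation.
  - by rewrite /poly_of big1 // => t _; rewrite mxE scale0r.
  - by move=> a c c' Wc Wc'; rewrite poly_ofP; apply: W_lin.
  - by rewrite poly_of_coords pihomog_dE.
exists (fun p => (coords p *m c) 0 0); split=> //.
- by move=> a p q /=; rewrite coordsP mulmxDl -scalemxAl !mxE.
- by move=> p /W_pihomog; rewrite -poly_of_coords => /Wc.
Qed.

End HomogSeparation.

Section HomogIdeal.
Variables (K : fieldType) (k : nat) (I : {mpoly K[k]} -> Prop).
Hypothesis homogI : is_homog_ideal I.

Let idealI : is_ideal I. Proof. by case: homogI. Qed.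
Let I_pihomog d p : I p -> I (pihomog mdeg d p). Proof. by case: homogI => _; apply. Qed.

Lemma not_mul_injectiveP l d : ~ mul_injective I l d ->
  exists f, [/\ f \is d.-homog, I (l * f) & ~ I f].
Proof.
move=> not_inj; apply: NNPP => none; apply: not_inj => f fd Ilf.
by apply: NNPP => nIf; apply: none; exists f.
Qed.

Lemma not_mul_surjectiveP l d : ~ mul_surjective I l d ->
  exists2 g, g \is d.+1.-homog & forall f, f \is d.-homog -> ~ I (g - l * f).
Proof.
move=> not_surj; apply: NNPP => none; apply: not_surj => g gd.
apply: NNPP => no_f; apply: none; exists g => // f fd Igf.
by apply: no_f; exists f.
Qed.

Lemma homog_ideal_separation d f : f \is d.-homog -> ~ I f ->
  exists alpha : {mpoly K[k]} -> K,
    [/\ scalar alpha, forall p, I p -> alpha p = 0 & alpha f != 0].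
Proof.
by apply: homog_separation; [apply: ideal0 | apply: ideal_linear | apply: I_pihomog].
Qed.

Lemma homog_ideal_mul_separation l d g : l \is 1.-homog -> g \is d.+1.-homog ->
  (forall f, f \is d.-homog -> ~ I (g - l * f)) ->
  exists alpha : {mpoly K[k]} -> K, [/\ scalar alpha, forall p, I p -> alpha p = 0,
    forall q, alpha (l * q) = 0 & alpha g != 0].
Proof.
move=> l1 gd g_new; pose W p := exists q, I (p - l * q).
have W_lin a p p' : W p -> W p' -> W (a *: p + p').
  case=> q Ipq [q' Ipq']; exists (a *: q + q').
  by have := ideal_linear idealI a Ipq Ipq'; congr I; rewrite mulrDr -scalerAr; ring.
have W_pihomog p : W p -> W (pihomog mdeg d.+1 p).
  case=> q Ipq; exists (pihomog mdeg d q).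
  by rewrite -(pihomogMl d q l1) add1n -linearB; apply: I_pihomog.
have nWg : ~ W g.
  case=> q Igq; apply: (g_new (pihomog mdeg d q)); first exact: pihomogP.
  by rewrite -(pihomogMl d q l1) add1n -(pihomog_dE gd) -linearB; apply: I_pihomog.
have [|alpha [alpha_scalar alphaW alphag]] := homog_separation _ W_lin W_pihomog gd nWg.
  by exists 0; rewrite mulr0 subr0; apply: ideal0.
exists alpha; split=> // [p Ip|q]; apply: alphaW.
  by exists 0; rewrite mulr0 subr0.
by exists q; rewrite subrr; apply: ideal0.
Qed.

End HomogIdeal.

Section HilbertFunction.
Variables (K : fieldType) (k : nat) (I : {mpoly K[k]} -> Prop).
Hypothesis idealI : is_ideal I.

Definition lincomb h (s : h.-tuple {mpoly K[k]}) (c : 'rV[K]_h) :=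
  \sum_(t < h) c 0 t *: tnth s t.

Definition basis_mod d h (s : h.-tuple {mpoly K[k]}) :=
  [/\ forall t, tnth s t \is d.-homog,
      forall f, f \is d.-homog -> exists c, I (f - lincomb s c)
    & forall c, I (lincomb s c) -> c = 0].

Lemma HF_is_basis d h : HF_is I d h -> exists s : h.-tuple _, basis_mod d s.
Proof.
case=> s [sd s_span s_free]; exists s; split=> // [f /s_span[c Ic]|c Ic].
  by exists (\row_t c t); rewrite /lincomb; under eq_bigr do rewrite mxE.
by apply/rowP => t; rewrite mxE; apply: (s_free (fun t => c 0 t)).
Qed.

Lemma lincomb_mulmx h h' (s : h'.-tuple {mpoly K[k]}) (c : 'rV[K]_h) M :
  lincomb s (c *m M) = \sum_(t < h) c 0 t *: lincomb s (row t M).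
Proof.
rewrite /lincomb; under [RHS]eq_bigr do rewrite scaler_sumr.
rewrite exchange_big; apply: eq_bigr => u _; rewrite !mxE scaler_suml.
by apply: eq_bigr => t _; rewrite !mxE scalerA.
Qed.

Lemma lincomb_homog d h (s : h.-tuple {mpoly K[k]}) c :
  (forall t, tnth s t \is d.-homog) -> lincomb s c \is d.-homog.
Proof. by move=> sd; apply: rpred_sum => t _; apply: rpredZ. Qed.

Lemma lincombB h (s : h.-tuple {mpoly K[k]}) c c' :
  lincomb s (c - c') = lincomb s c - lincomb s c'.
Proof. by rewrite /lincomb -sumrB; apply: eq_bigr => t _; rewrite !mxE scalerBl. Qed.

Lemma lincomb0 h (s : h.-tuple {mpoly K[k]}) : lincomb s 0 = 0.
Proof. by rewrite /lincomb big1 // => t _; rewrite mxE scale0r. Qed.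

Lemma mul_form_matrix l d a b (s : a.-tuple {mpoly K[k]}) (s' : b.-tuple {mpoly K[k]}) :
  l \is 1.-homog -> basis_mod d s -> basis_mod d.+1 s' ->
  exists M : 'M[K]_(a, b), forall c, I (l * lincomb s c - lincomb s' (c *m M)).
Proof.
move=> l1 [sd _ _] [_ s'_span _].
have /fin_all_exists[r Ir] t : exists r, I (l * tnth s t - lincomb s' r).
  by apply: s'_span; rewrite -add1n dhomogM.
exists (\matrix_t r t) => c; rewrite lincomb_mulmx /lincomb mulr_sumr -sumrB.
apply: ideal_sum => // t; rewrite -scalerAr -scalerBr; apply: idealZ => //.
by rewrite rowK.
Qed.

Lemma HF_not_mul_injective l d b c : l \is 1.-homog ->
  HF_is I d b -> HF_is I d.+1 c -> (c < b)%N -> ~ mul_injective I l d.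
Proof.
move=> l1 /HF_is_basis[s sB] /HF_is_basis[s' s'B] lt_cb inj.
have [M IM] := mul_form_matrix l1 sB s'B; case: sB => sd _ s_free.
have /eqP rkM : row_free M.
  apply: inj_row_free => v vM; apply/s_free/inj; first exact: lincomb_homog.
  by have := IM v; rewrite vM lincomb0 subr0.
by have := rank_leq_col M; rewrite rkM leqNgt lt_cb.
Qed.

Lemma HF_not_mul_surjective l d a b : l \is 1.-homog ->
  HF_is I d a -> HF_is I d.+1 b -> (a < b)%N -> ~ mul_surjective I l d.
Proof.
move=> l1 /HF_is_basis[s sB] /HF_is_basis[s' s'B] lt_ab surj.
have [M IM] := mul_form_matrix l1 sB s'B; case: sB => _ s_span _; case: s'B => s'd _ s'_free.
suff /mxrankS : (1%:M <= M)%MS.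
  by rewrite mxrank1 => /leq_trans/(_ (rank_leq_row M)); rewrite leqNgt lt_ab.
apply/row_subP => u; set w := row u 1%:M.
have [f fd Iwf] := surj _ (lincomb_homog w s'd); have [c Ifc] := s_span f fd.
suff -> : w = c *m M by apply: submxMl.
apply/eqP; rewrite -subr_eq0; apply/eqP/s'_free; rewrite lincombB.
have -> : lincomb s' w - lincomb s' (c *m M) = (lincomb s' w - l * f)
    + l * (f - lincomb s c) + (l * lincomb s c - lincomb s' (c *m M)) by ring.
by apply: idealD => //; apply: idealD => //; apply: idealMl.
Qed.

End HilbertFunction.

Section MonomialSplit.
Variables (m n : nat).

Definition lift_mnmL (a : 'X_{1..m}) : 'X_{1..m + n} :=
  [multinom if split i is inl i' then a i' else 0%N | i < m + n].
Definition lift_mnmR (b : 'X_{1..n}) : 'X_{1..m + n} :=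
  [multinom if split i is inr i' then b i' else 0%N | i < m + n].
Definition proj_mnmL (M : 'X_{1..m + n}) : 'X_{1..m} := [multinom M (lshift n i) | i < m].
Definition proj_mnmR (M : 'X_{1..m + n}) : 'X_{1..n} := [multinom M (rshift m j) | j < n].

Lemma lift_mnmL_lshift a i : lift_mnmL a (lshift n i) = a i.
Proof. by rewrite mnmE (unsplitK (inl _ i)). Qed.
Lemma lift_mnmL_rshift a j : lift_mnmL a (rshift m j) = 0%N.
Proof. by rewrite mnmE (unsplitK (inr _ j)). Qed.
Lemma lift_mnmR_lshift b i : lift_mnmR b (lshift n i) = 0%N.
Proof. by rewrite mnmE (unsplitK (inl _ i)). Qed.
Lemma lift_mnmR_rshift b j : lift_mnmR b (rshift m j) = b j.
Proof. by rewrite mnmE (unsplitK (inr _ j)). Qed.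

Lemma proj_mnmL_liftLD a M : proj_mnmL (lift_mnmL a + M) = (a + proj_mnmL M)%MM.
Proof. by apply/mnmP => i; rewrite mnmE mnmDE lift_mnmL_lshift mnmDE mnmE. Qed.
Lemma proj_mnmR_liftLD a M : proj_mnmR (lift_mnmL a + M) = proj_mnmR M.
Proof. by apply/mnmP => j; rewrite mnmE mnmDE lift_mnmL_rshift mnmE. Qed.
Lemma proj_mnmL_liftRD b M : proj_mnmL (lift_mnmR b + M) = proj_mnmL M.
Proof. by apply/mnmP => i; rewrite mnmE mnmDE lift_mnmR_lshift mnmE. Qed.
Lemma proj_mnmR_liftRD b M : proj_mnmR (lift_mnmR b + M) = (b + proj_mnmR M)%MM.
Proof. by apply/mnmP => j; rewrite mnmE mnmDE lift_mnmR_rshift mnmDE mnmE. Qed.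
Lemma proj_mnmL0 : proj_mnmL 0%MM = 0%MM. Proof. by apply/mnmP => i; rewrite !mnmE. Qed.
Lemma proj_mnmR0 : proj_mnmR 0%MM = 0%MM. Proof. by apply/mnmP => j; rewrite !mnmE. Qed.

Lemma mdeg_lift_mnmL a : mdeg (lift_mnmL a) = mdeg a.
Proof.
rewrite !mdegE big_split_ord /= [X in (_ + X)%N]big1 ?addn0 => [|j _].
  by apply: eq_bigr => i _; rewrite lift_mnmL_lshift.
exact: lift_mnmL_rshift.
Qed.
Lemma mdeg_lift_mnmR b : mdeg (lift_mnmR b) = mdeg b.
Proof.
rewrite !mdegE big_split_ord /= [X in (X + _)%N]big1 ?add0n => [|i _].
  by apply: eq_bigr => j _; rewrite lift_mnmR_rshift.
exact: lift_mnmR_lshift.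
Qed.

Variable K : fieldType.

Lemma ext_leftX a : ext_left n ('X_[a] : {mpoly K[m]}) = 'X_[lift_mnmL a].
Proof.
rewrite /ext_left comp_mpolyX [RHS]mpolyXE_id big_split_ord /=.
rewrite [X in _ = _ * X]big1 ?mulr1 => [|j _]; last by rewrite lift_mnmL_rshift expr0.
by apply: eq_bigr => i _; rewrite tnth_mktuple lift_mnmL_lshift.
Qed.
Lemma ext_rightX b : ext_right m ('X_[b] : {mpoly K[n]}) = 'X_[lift_mnmR b].
Proof.
rewrite /ext_right comp_mpolyX [RHS]mpolyXE_id big_split_ord /=.
rewrite [X in _ = X * _]big1 ?mul1r => [|i _]; last by rewrite lift_mnmR_lshift expr0.
by apply: eq_bigr => j _; rewrite tnth_mktuple lift_mnmR_rshift.
Qed.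

Lemma ext_left_dhomog d (p : {mpoly K[m]}) : p \is d.-homog -> ext_left n p \is d.-homog.
Proof.
move=> /dhomogP pd; rewrite [p]mpolyE /ext_left raddf_sum /= big_seq.
apply: rpred_sum => a /pd ad; rewrite linearZ /= rpredZ // -/(ext_left n _).
by rewrite ext_leftX dhomogX -ad; apply/eqP/mdeg_lift_mnmL.
Qed.
Lemma ext_right_dhomog d (q : {mpoly K[n]}) : q \is d.-homog -> ext_right m q \is d.-homog.
Proof.
move=> /dhomogP qd; rewrite [q]mpolyE /ext_right raddf_sum /= big_seq.
apply: rpred_sum => b /qd bd; rewrite linearZ /= rpredZ // -/(ext_right m _).
by rewrite ext_rightX dhomogX -bd; apply/eqP/mdeg_lift_mnmR.
Qed.

End MonomialSplit.

Lemma linear_form_split (K : fieldType) (m n : nat) (l : {mpoly K[m + n]}) :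
  l \is 1.-homog -> exists l' l'', [/\ l' \is 1.-homog, l'' \is 1.-homog &
    l = ext_left n l' + ext_right m l''].
Proof.
move=> l1; have X1 k (t : 'I_k) : ('X_t : {mpoly K[k]}) \is 1.-homog.
  by rewrite dhomogX; apply/eqP/mdeg1.
exists (\sum_(i < m) l@_U_(lshift n i) *: 'X_i).
exists (\sum_(j < n) l@_U_(rshift m j) *: 'X_j).
split; try by apply: rpred_sum => t _; apply/rpredZ/X1.
rewrite {1}(linear_formE l1) big_split_ord /ext_left /ext_right !raddf_sum /=.
by congr (_ + _); apply: eq_bigr => t _;
  rewrite linearZ /= comp_mpolyXU -tnth_nth tnth_mktuple.
Qed.

Section TensorDual.
Variables (K : fieldType) (m n : nat).
Variables (alpha : {mpoly K[m]} -> K) (beta : {mpoly K[n]} -> K).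

Definition tensor_dual : {mpoly K[m + n]} -> K :=
  mpoly_dual (fun M => alpha 'X_[proj_mnmL M] * beta 'X_[proj_mnmR M]).

Lemma tensor_dual_scalar : scalar tensor_dual.
Proof. exact: mpoly_dual_scalar. Qed.

Lemma tensor_dualX M :
  tensor_dual 'X_[M] = alpha 'X_[proj_mnmL M] * beta 'X_[proj_mnmR M].
Proof. exact: mpoly_dualX. Qed.

Lemma tensor_dual_eq0l P : (forall p, alpha p = 0) -> tensor_dual P = 0.
Proof.
by move=> alpha0; rewrite /tensor_dual /mpoly_dual big1 // => M _; rewrite alpha0 mul0r mulr0.
Qed.

Lemma tensor_dual_eq0r P : (forall q, beta q = 0) -> tensor_dual P = 0.
Proof.
by move=> beta0; rewrite /tensor_dual /mpoly_dual big1 // => M _; rewrite beta0 !mulr0.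
Qed.

End TensorDual.

Section TensorDualMul.
Variables (K : fieldType) (m n : nat).
Variables (alpha : {mpoly K[m]} -> K) (beta : {mpoly K[n]} -> K).
Hypotheses (alpha_scalar : scalar alpha) (beta_scalar : scalar beta).

Lemma tensor_dual_mull u P : tensor_dual alpha beta (ext_left n u * P) =
  tensor_dual (fun p => alpha (u * p)) beta P.
Proof.
move: P; apply: scalar_mpolyP => [||M]; rewrite ?tensor_dualX.
- exact/scalar_mull/tensor_dual_scalar.
- exact: tensor_dual_scalar.
move: u; apply: scalar_mpolyP => [a p q|a p q|a] /=.
- rewrite /ext_left comp_mpolyD comp_mpolyZ mulrDl -scalerAl.
  exact: (scalarP (tensor_dual_scalar _ _)).
- by rewrite mulrDl -scalerAl (scalarP alpha_scalar) mulrDl mulrA.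
rewrite ext_leftX -mpolyXD tensor_dualX.
by rewrite proj_mnmL_liftLD proj_mnmR_liftLD mpolyXD.
Qed.

Lemma tensor_dual_mulr v P : tensor_dual alpha beta (ext_right m v * P) =
  tensor_dual alpha (fun q => beta (v * q)) P.
Proof.
move: P; apply: scalar_mpolyP => [||M]; rewrite ?tensor_dualX.
- exact/scalar_mull/tensor_dual_scalar.
- exact: tensor_dual_scalar.
move: v; apply: scalar_mpolyP => [a p q|a p q|b] /=.
- rewrite /ext_right comp_mpolyD comp_mpolyZ mulrDl -scalerAl.
  exact: (scalarP (tensor_dual_scalar _ _)).
- by rewrite mulrDl -scalerAl (scalarP beta_scalar) mulrDr mulrCA.
rewrite ext_rightX -mpolyXD tensor_dualX.
by rewrite proj_mnmL_liftRD proj_mnmR_liftRD mpolyXD.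
Qed.

End TensorDualMul.

Lemma tensor_dual_ext (K : fieldType) (m n : nat)
    (alpha : {mpoly K[m]} -> K) (beta : {mpoly K[n]} -> K) u v :
  scalar alpha -> scalar beta ->
  tensor_dual alpha beta (ext_left n u * ext_right m v) = alpha u * beta v.
Proof.
move=> alpha_scalar beta_scalar; rewrite tensor_dual_mull // -[ext_right m v]mulr1.
by rewrite tensor_dual_mulr // -mpolyX0 tensor_dualX proj_mnmL0 proj_mnmR0 !mpolyX0 !mulr1.
Qed.

Section TensorIdeal.
Variables (K : fieldType) (m n : nat).
Variables (I' : {mpoly K[m]} -> Prop) (I'' : {mpoly K[n]} -> Prop).

Local Notation I := (tensor_ideal I' I'').

Lemma tensor_idealD F G : I F -> I G -> I (F + G).
Proof.
move=> [s [s_gen ->]] [t [t_gen ->]]; exists (s ++ t); rewrite big_cat.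
by split=> // x; rewrite mem_cat => /orP[/s_gen|/t_gen].
Qed.

Lemma tensor_ideal_extl r p : I' p -> I (r * ext_left n p).
Proof.
move=> I'p; exists [:: (r, ext_left n p)]; rewrite big_seq1.
by split=> // x; rewrite inE => /eqP -> /=; left; exists p.
Qed.

Lemma tensor_ideal_extr r q : I'' q -> I (r * ext_right m q).
Proof.
move=> I''q; exists [:: (r, ext_right m q)]; rewrite big_seq1.
by split=> // x; rewrite inE => /eqP -> /=; right; exists q.
Qed.

Lemma tensor_dual_ideal (alpha : {mpoly K[m]} -> K) (beta : {mpoly K[n]} -> K) F :
  is_ideal I' -> is_ideal I'' -> scalar alpha -> scalar beta ->
  (forall p, I' p -> alpha p = 0) -> (forall q, I'' q -> beta q = 0) ->
  I F -> tensor_dual alpha beta F = 0.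
Proof.
move=> idealI' idealI'' alpha_scalar beta_scalar alphaI' betaI'' [s [s_gen ->]].
rewrite (scalar_sum (tensor_dual_scalar _ _)) big_seq big1 // => -[r g] /s_gen /=.
case=> [[p I'p ->]|[q I''q ->]]; rewrite mulrC.
  rewrite tensor_dual_mull // tensor_dual_eq0l // => p'.
  exact/alphaI'/(idealMr idealI').
rewrite tensor_dual_mulr // tensor_dual_eq0r // => q'.
exact/betaI''/(idealMr idealI'').
Qed.

End TensorIdeal.

Section TensorFailsWLP.
Variables (K : fieldType) (m n : nat).
Variables (I' : {mpoly K[m]} -> Prop) (I'' : {mpoly K[n]} -> Prop).
Hypotheses (homogI' : is_homog_ideal I') (homogI'' : is_homog_ideal I'').
Variables (l' : {mpoly K[m]}) (l'' : {mpoly K[n]}).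
Hypotheses (l'1 : l' \is 1.-homog) (l''1 : l'' \is 1.-homog).

Let idealI' : is_ideal I'. Proof. by case: homogI'. Qed.
Let idealI'' : is_ideal I''. Proof. by case: homogI''. Qed.
Local Notation l := (ext_left n l' + ext_right m l'').

Lemma tensor_not_mul_injective i j :
  ~ mul_injective I' l' i -> ~ mul_injective I'' l'' j ->
  ~ mul_injective (tensor_ideal I' I'') l (i + j).
Proof.
move=> /(not_mul_injectiveP (I := I'))[f' [f'i Il'f' nIf']].
move=> /(not_mul_injectiveP (I := I''))[f'' [f''j Il''f'' nIf'']] inj.
have [alpha [alpha_scalar alphaI' alphaf']] := homog_ideal_separation homogI' f'i nIf'.
have [beta [beta_scalar betaI'' betaf'']] := homog_ideal_separation homogI'' f''j nIf''.
have : tensor_ideal I' I'' (ext_left n f' * ext_right m f'').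
  apply: inj; first by apply: dhomogM; [apply: ext_left_dhomog | apply: ext_right_dhomog].
  have -> : l * (ext_left n f' * ext_right m f'') =
      ext_right m f'' * ext_left n (l' * f') + ext_left n f' * ext_right m (l'' * f'').
    by rewrite /ext_left /ext_right !rmorphM /=; ring.
  by apply: tensor_idealD; [apply: tensor_ideal_extl | apply: tensor_ideal_extr].
move/(tensor_dual_ideal idealI' idealI'' alpha_scalar beta_scalar alphaI' betaI'').
by rewrite tensor_dual_ext // => /eqP; rewrite mulf_eq0 (negbTE alphaf') (negbTE betaf'').
Qed.

Lemma tensor_not_mul_surjective i j :
  ~ mul_surjective I' l' i -> ~ mul_surjective I'' l'' j ->
  ~ mul_surjective (tensor_ideal I' I'') l (i + j.+1).
Proof.
move=> /(not_mul_surjectiveP (I := I'))[g' g'i g'_new].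
move=> /(not_mul_surjectiveP (I := I''))[g'' g''j g''_new] surj.
have [alpha [alpha_scalar alphaI' alphal' alphag']] :=
  homog_ideal_mul_separation homogI' l'1 g'i g'_new.
have [beta [beta_scalar betaI'' betal'' betag'']] :=
  homog_ideal_mul_separation homogI'' l''1 g''j g''_new.
have [|F _] := surj (ext_left n g' * ext_right m g'').
  by rewrite -addSn; apply: dhomogM; [apply: ext_left_dhomog | apply: ext_right_dhomog].
move/(tensor_dual_ideal idealI' idealI'' alpha_scalar beta_scalar alphaI' betaI'').
rewrite (scalarB (tensor_dual_scalar _ _)) mulrDl (scalarD (tensor_dual_scalar _ _)).
rewrite tensor_dual_ext // tensor_dual_mull // tensor_dual_mulr //.
rewrite tensor_dual_eq0l // tensor_dual_eq0r // addr0 subr0 => /eqP.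
by rewrite mulf_eq0 (negbTE alphag') (negbTE betag'').
Qed.

End TensorFailsWLP.

Theorem theorem3p2 (K : fieldType) (m n : nat)
    (I' : {mpoly K[m]} -> Prop) (I'' : {mpoly K[n]} -> Prop) (i j : nat) :
  std_graded_artinian I' -> std_graded_artinian I'' ->
  fails_WLP_in_degree I' i -> isolated_peak I'' j ->
  ~ has_WLP (tensor_ideal I' I'') /\ fails_WLP_in_degree (tensor_ideal I' I'') (i + j).
Proof.
move=> [homogI' _ _] [homogI'' _ _] noWLP' [j_gt0 [a [b [c [HFa HFb HFc lt_ab lt_cb]]]]].
have idealI'' : is_ideal I'' by case: homogI''.
suff noWLP : fails_WLP_in_degree (tensor_ideal I' I'') (i + j).
  by split=> // -[l l1 WLP]; apply: noWLP l l1 (WLP (i + j)).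
move=> l /linear_form_split[l' [l'' [l'1 l''1 ->]]].
have [noinj' nosurj'] : ~ mul_injective I' l' i /\ ~ mul_surjective I' l' i.
  by split=> WLP'; apply: (noWLP' l' l'1); [left | right].
case=> [|].
- apply: (tensor_not_mul_injective homogI' homogI'' noinj').
  exact (HF_not_mul_injective idealI'' l''1 HFb HFc lt_cb).
- rewrite -(prednK j_gt0).
  apply: (tensor_not_mul_surjective homogI' homogI'' l'1 l''1 nosurj').
  by apply: (HF_not_mul_surjective idealI'' l''1 HFa _ lt_ab); rewrite prednK.
Qed.
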